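(* For all integers $t,n$: (i) the restriction $\phi_*:X_{t,n}\to Y_t$ is injective; (ii) there are bijections $\alpha:X_{t,n}\to X_{-t,n+6}$ and $\beta:Y_t\to Y_{-t}$ such that $\phi_*\circ\alpha=\beta\circ\phi_*$ on $X_{t,n}$; (iii) there is a bijection $\gamma:X_{t,n}\to X_{t,n+12}$ such that $\phi_*\circ\gamma=\phi_*$ on $X_{t,n}$; (iv) the restriction $\phi_*:\coprod_{j=0}^{11}X_{t,n+j}\to Y_t$ is a bijection.
   Context: $B_3=\langle\sigma_1,\sigma_2:\sigma_1\sigma_2\sigma_1=\sigma_2\sigma_1\sigma_2\rangle$. The homomorphism $\phi:B_3\to\mathrm{SL}_2(\mathbb{Z})$ is defined by $\phi(\sigma_1)=\begin{bmatrix}1&1\\0&1\end{bmatrix}$, $\phi(\sigma_2)=\begin{bmatrix}1&0\\-1&1\end{bmatrix}$; it is surjective and induces a map $\phi_*$ from the set of conjugacy classes of $B_3$ to the set of conjugacy classes of $\mathrm{SL}_2(\mathbb{Z})$. Let $\epsilon:B_3\to\mathbb{Z}$ be the exponent sum homomorphism ($\epsilon(\sigma_1)=\epsilon(\sigma_2)=1$), and define the trace of $g\in B_3$ as $\mathrm{tr}(\phi(g))$; both are class functions. $X_{t,n}$ is the set of conjugacy classes in $B_3$ of trace $t$ and exponent sum $n$, and $Y_t$ is the set of conjugacy classes in $\mathrm{SL}_2(\mathbb{Z})$ of trace $t$. *)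

From HB Require Import structures.
From mathcomp Require Import all_boot all_order all_algebra.
From mathcomp Require Import boolp classical_sets functions.
Set Implicit Arguments. Unset Strict Implicit. Unset Printing Implicit Defensive.
Import Order.TTheory GRing.Theory Num.Theory.
Local Open Scope ring_scope.
Local Open Scope classical_set_scope.

(* ---------- The braid group B_3 as the group presented by
   < s1, s2 | s1 s2 s1 = s2 s1 s2 > : words in the generators and their
   inverses, modulo the congruence generated by free cancellation and the
   braid relation. ---------- *)
Inductive gen := s1 | s2 | s1i | s2i.

Definition ginv (a : gen) : gen :=
  match a with s1 => s1i | s2 => s2i | s1i => s1 | s2i => s2 end.

Definition word := seq gen.

Definition winv (w : word) : word := rev (map ginv w).

Inductive beq : word -> word -> Prop :=
  | beq_refl w : beq w w
  | beq_sym u v : beq u v -> beq v u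
  | beq_trans u v w : beq u v -> beq v w -> beq u w
  | beq_cancel u v a : beq (u ++ [:: a; ginv a] ++ v) (u ++ v)
  | beq_braid u v : beq (u ++ [:: s1; s2; s1] ++ v) (u ++ [:: s2; s1; s2] ++ v).

Definition bconj (h g : word) : Prop := exists w : word, beq h (w ++ g ++ winv w).

Definition b3class (g : word) : set word := [set h | bconj h g].

Definition mx2 (a b c d : int) : 'M[int]_2 :=
  \matrix_(i < 2, j < 2)
    if (i == 0 :> nat) then (if (j == 0 :> nat) then a else b)
    else (if (j == 0 :> nat) then c else d).

Definition phigen (a : gen) : 'M[int]_2 :=
  match a with
  | s1 => mx2 1 1 0 1
  | s2 => mx2 1 0 (-1) 1
  | s1i => mx2 1 (-1) 0 1
  | s2i => mx2 1 0 1 1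
  end.

Definition phi (w : word) : 'M[int]_2 := foldr (fun a M => phigen a *m M) 1%:M w.

Definition gexp (a : gen) : int :=
  match a with s1 | s2 => 1 | s1i | s2i => -1 end.
Definition expsum (w : word) : int := \sum_(a <- w) gexp a.

Definition btrace (w : word) : int := \tr (phi w).

Definition sl2class (A : 'M[int]_2) : set 'M[int]_2 :=
  [set B | exists P : 'M[int]_2, \det P = 1 /\ B = P *m A *m invmx P].

Definition Xset (t n : int) : set (set word) :=
  [set C | exists g : word, C = b3class g /\ btrace g = t /\ expsum g = n].

Definition Yset (t : int) : set (set 'M[int]_2) :=
  [set D | exists A : 'M[int]_2, \det A = 1 /\ \tr A = t /\ D = sl2class A].

Definition phistar (C : set word) : set 'M[int]_2 :=
  [set B | exists g, C g /\ sl2class (phi g) B].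

(* disjoint union  coprod_{j=0}^{11} X_{t,n+j}  as a set of tagged classes *)
Definition Xcoprod12 (t n : int) : set ('I_12 * set word) :=
  [set p | Xset t (n + (nat_of_ord p.1)%:Z) p.2].

(* Δ² = (σ1σ2σ1)² is central in B_3, has exponent sum 6 and φ(Δ²) = -1.
   Modulo Δ², every braid is an alternating word in x = σ1σ2σ1 and
   y = σ1σ2 (where x² = y³ = Δ²), and a ping-pong argument on the sign
   pattern of 2x2 integer matrices shows that a nonempty alternating word
   never maps to a scalar matrix.  Hence the kernel of φ is generated by Δ⁴,
   whose exponent sum is 12: braids with conjugate images have exponent sums
   congruent mod 12, and they are conjugate as soon as these sums agree.
   Multiplication by the central elements Δ² and Δ⁴ then gives α and γ (with
   β the negation of matrices), and the surjectivity of φ, which follows from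
   the Euclidean algorithm, gives (iv). *)

From Stdlib Require Import Setoid Morphisms.
From HB Require Import structures.
From mathcomp Require Import all_boot all_order all_algebra.
From mathcomp Require Import boolp classical_sets functions.
From mathcomp Require Import zify ring.
Import Order.TTheory GRing.Theory Num.Theory.
Local Open Scope ring_scope.
Local Open Scope classical_set_scope.

Lemma mx2_eta (M : 'M[int]_2) : M = mx2 (M 0 0) (M 0 1) (M 1 0) (M 1 1).
Proof.
apply/matrixP => i j; rewrite !mxE.
by case: i => [[|[|//]] Hi]; case: j => [[|[|//]] Hj] /=; congr (M _ _); apply: val_inj.
Qed.

Lemma mx2_inj a b c d a' b' c' d' :
  mx2 a b c d = mx2 a' b' c' d' -> [/\ a = a', b = b', c = c' & d = d'].
Proof.
move=> E; have Eij i j := congr1 (fun M : 'M[int]_2 => M i j) E.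
by move: (Eij 0 0) (Eij 0 1) (Eij 1 0) (Eij 1 1); rewrite !mxE.
Qed.

Lemma mx2_mul a b c d a' b' c' d' :
  mx2 a b c d *m mx2 a' b' c' d' =
  mx2 (a * a' + b * c') (a * b' + b * d') (c * a' + d * c') (c * b' + d * d').
Proof.
apply/matrixP => i j; rewrite !mxE !big_ord_recl big_ord0 !mxE /=.
by case: i => [[|[|//]] Hi]; case: j => [[|[|//]] Hj]; rewrite /= addr0.
Qed.

Lemma mx2_scale s a b c d : s *: mx2 a b c d = mx2 (s * a) (s * b) (s * c) (s * d).
Proof.
apply/matrixP => i j; rewrite !mxE.
by case: i => [[|[|//]] Hi]; case: j => [[|[|//]] Hj].
Qed.

Lemma scalar_mx2 s : s%:M = mx2 s 0 0 s.
Proof.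
apply/matrixP => i j; rewrite !mxE.
by case: i => [[|[|//]] Hi]; case: j => [[|[|//]] Hj].
Qed.

Lemma mx2_det a b c d : \det (mx2 a b c d) = a * d - b * c.
Proof.
rewrite (expand_det_row _ 0) !big_ord_recl big_ord0 /cofactor !det_mx11 !mxE /=.
by rewrite expr0 expr1; ring.
Qed.

#[local] Hint Resolve beq_refl : core.

#[global] Instance beq_Equivalence : Equivalence beq.
Proof. by split; [exact: beq_refl | exact: beq_sym | exact: beq_trans]. Qed.

Lemma beq_catl p u v : beq u v -> beq (p ++ u) (p ++ v).
Proof.
elim=> {u v} [w|u v _ IH|u v w _ IH1 _ IH2|u v a|u v] //.
- by symmetry.
- by transitivity (p ++ v).
- by have := beq_cancel (p ++ u) v a; rewrite -!catA.
- by have := beq_braid (p ++ u) v; rewrite -!catA.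
Qed.

Lemma beq_catr q u v : beq u v -> beq (u ++ q) (v ++ q).
Proof.
elim=> {u v} [w|u v _ IH|u v w _ IH1 _ IH2|u v a|u v] //.
- by symmetry.
- by transitivity (v ++ q).
- by have := beq_cancel u (v ++ q) a; rewrite -!catA.
- by have := beq_braid u (v ++ q); rewrite -!catA.
Qed.

#[global] Instance cat_beq_Proper : Proper (beq ==> beq ==> beq) (@cat gen).
Proof.
by move=> u u' Hu v v' Hv; transitivity (u' ++ v); [exact: beq_catr | exact: beq_catl].
Qed.

#[global] Instance cons_beq_Proper a : Proper (beq ==> beq) (cons a).
Proof. by move=> u v; apply: (beq_catl [:: a]). Qed.

Lemma beq_cancel_in u v a : beq (u ++ a :: ginv a :: v) (u ++ v).
Proof. exact: beq_cancel. Qed.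

Lemma ginvK : involutive ginv. Proof. by case. Qed.

Lemma winv_cat u v : winv (u ++ v) = winv v ++ winv u.
Proof. by rewrite /winv map_cat rev_cat. Qed.

Lemma winvK : involutive winv.
Proof. by move=> w; rewrite /winv map_rev revK -map_comp (eq_map ginvK) map_id. Qed.

Lemma cat_winvK w v : beq (w ++ winv w ++ v) v.
Proof.
elim: w v => [|a w IH] v //=.
rewrite /winv map_cons rev_cons -cats1 -/(winv w) -catA IH.
exact: beq_cancel_in [::] v a.
Qed.

Lemma winv_catK w v : beq (winv w ++ w ++ v) v.
Proof. by have := cat_winvK (winv w) v; rewrite winvK. Qed.

Definition inverse_gens (a b : gen) : bool :=
  match a, b with
  | s1, s1i | s1i, s1 | s2, s2i | s2i, s2 => true
  | _, _ => false
  end.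

Lemma inverse_gensP a b : inverse_gens a b -> b = ginv a.
Proof. by case: a; case: b. Qed.

Fixpoint free_reduce (w : word) : word :=
  if w is a :: w' then
    if free_reduce w' is b :: r then (if inverse_gens a b then r else a :: b :: r)
    else [:: a]
  else [::].

Lemma beq_free_reduce w : beq w (free_reduce w).
Proof.
elim: w => [|a w IH] //=.
rewrite {1}IH; case: (free_reduce w) => [|b r] //.
case: ifP => [/inverse_gensP ->|_] //.
exact: beq_cancel_in [::] r a.
Qed.

Lemma free_reduce_beq u v : free_reduce u = free_reduce v -> beq u v.
Proof. by move=> E; rewrite (beq_free_reduce u) E -(beq_free_reduce v). Qed.

Lemma beq_braid_inv : beq [:: s1i; s2i; s1i] [:: s2i; s1i; s2i].
Proof.
transitivity ([:: s1i; s2i; s1i] ++ [:: s2; s1; s2] ++ [:: s2i; s1i; s2i]).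
  exact: free_reduce_beq.
rewrite -(beq_braid [:: s1i; s2i; s1i] [:: s2i; s1i; s2i]).
exact: free_reduce_beq.
Qed.

Definition central (z : word) : Prop := forall w, beq (w ++ z) (z ++ w).

Lemma central_gen z : (forall a, beq (a :: z) (z ++ [:: a])) -> central z.
Proof.
move=> Hz; elim=> [|a w IH] /=; first by rewrite cats0.
by rewrite IH -[z ++ a :: w]/(z ++ [:: a] ++ w) catA -Hz.
Qed.

Lemma commute_ginv z a :
  beq (a :: z) (z ++ [:: a]) -> beq (ginv a :: z) (z ++ [:: ginv a]).
Proof.
move=> Ha.
have Ez : beq z ((z ++ [:: a]) ++ [:: ginv a]) by rewrite -catA beq_cancel_in cats0.
have Ea : beq (ginv a :: a :: z ++ [:: ginv a]) (z ++ [:: ginv a]).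
  by have := beq_cancel_in [::] (z ++ [:: ginv a]) (ginv a); rewrite ginvK.
by rewrite {1}Ez -Ha.
Qed.

Lemma central_winv z : central z -> central (winv z).
Proof.
move=> Hz w; transitivity (winv z ++ (z ++ w) ++ winv z).
  by rewrite -catA winv_catK.
by rewrite -Hz -!catA -[z ++ winv z]cats0 -catA cat_winvK cats0.
Qed.

Lemma central_cat z z' : central z -> central z' -> central (z ++ z').
Proof. by move=> Hz Hz' w; rewrite catA Hz -catA Hz' catA. Qed.

Lemma central_nil : central [::].
Proof. by move=> w; rewrite cats0. Qed.

Lemma central_swap z u v : central z -> beq (u ++ z ++ v) (z ++ u ++ v).
Proof. by move=> Hz; rewrite !catA Hz. Qed.

Definition Delta : word := [:: s1; s2; s1].
Definition Delta2 : word := Delta ++ Delta.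
Arguments Delta : simpl never.
Arguments Delta2 : simpl never.

Lemma Delta2_central : central Delta2.
Proof.
have swap_s1 : beq (s1 :: Delta) (Delta ++ [:: s2]) by exact: (beq_braid [:: s1] [::]).
have swap_s2 : beq (s2 :: Delta) (Delta ++ [:: s1]).
  by symmetry; exact: (beq_braid [::] [:: s1]).
have comm_s1 : beq (s1 :: Delta2) (Delta2 ++ [:: s1]).
  by rewrite /Delta2 -cat_cons swap_s1 -catA /= swap_s2.
have comm_s2 : beq (s2 :: Delta2) (Delta2 ++ [:: s2]).
  by rewrite /Delta2 -cat_cons swap_s2 -catA /= swap_s1.
apply: central_gen; case; [exact: comm_s1 | exact: comm_s2 |
  exact: commute_ginv _ s1 comm_s1 | exact: commute_ginv _ s2 comm_s2].
Qed.

Definition Delta2_pow (k : int) : word :=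
  match k with
  | Posz n => flatten (nseq n Delta2)
  | Negz n => flatten (nseq n.+1 (winv Delta2))
  end.

Lemma Delta2_pow_central k : central (Delta2_pow k).
Proof.
have central_pow z n : central z -> central (flatten (nseq n z)).
  by move=> Hz; elim: n => [|n IH] /=; [exact: central_nil | exact: central_cat].
by case: k => n; apply: central_pow; [exact: Delta2_central | exact/central_winv/Delta2_central].
Qed.

Lemma Delta2_powD1 k : beq (Delta2 ++ Delta2_pow k) (Delta2_pow (k + 1)).
Proof.
case: k => [n|[|n]].
- by rewrite (_ : Posz n + 1 = Posz n.+1) //; lia.
- by rewrite -[Delta2_pow _]/(winv Delta2 ++ [::]) cat_winvK.
- rewrite -[Delta2_pow _]/(winv Delta2 ++ Delta2_pow (Negz n)) cat_winvK.
  by rewrite (_ : Negz n.+1 + 1 = Negz n) // !NegzE; lia.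
Qed.

Lemma Delta2_powB1 k : beq (winv Delta2 ++ Delta2_pow k) (Delta2_pow (k - 1)).
Proof.
case: k => [[|n]|n].
- by rewrite cats0.
- rewrite -[Delta2_pow _]/(Delta2 ++ Delta2_pow n) winv_catK.
  by rewrite (_ : Posz n.+1 - 1 = Posz n) //; lia.
- by rewrite (_ : Negz n - 1 = Negz n.+1) // !NegzE; lia.
Qed.

Lemma phi_cat u v : phi (u ++ v) = phi u *m phi v.
Proof. by elim: u => [|a u IH] /=; rewrite ?mul1mx // -mulmxA -IH. Qed.

Lemma phi_det w : \det (phi w) = 1.
Proof.
elim: w => [|a w IH] /=; first by rewrite det1.
by rewrite det_mulmx IH mulr1; case: a; rewrite /= mx2_det.
Qed.

Lemma phigen_mulV a : phigen a *m phigen (ginv a) = 1%:M.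
Proof. by rewrite scalar_mx2; case: a; rewrite /= mx2_mul; congr mx2; lia. Qed.

Definition mX : 'M[int]_2 := mx2 0 1 (-1) 0.

Lemma phi_Delta : phi Delta = mX.
Proof. by rewrite /phi /= scalar_mx2 !mx2_mul; congr mx2; lia. Qed.

Lemma phi_beq {u v} : beq u v -> phi u = phi v.
Proof.
elim=> {u v} [w|u v _ ->|u v w _ -> _ ->|u v a|u v] //.
- by rewrite !phi_cat /= mulmx1 phigen_mulV mul1mx.
- rewrite !phi_cat -/Delta phi_Delta; congr (_ *m (_ *m _)).
  by rewrite /phi /= scalar_mx2 !mx2_mul; congr mx2; lia.
Qed.

Lemma left_invmx (R : comUnitRingType) n (A B : 'M[R]_n) : B *m A = 1%:M -> invmx A = B.
Proof. by move=> BA; have [_ UA] := mulmx1_unit BA; rewrite -[LHS]mul1mx -BA mulmxK. Qed.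

Lemma phi_winv w : phi (winv w) = invmx (phi w).
Proof.
apply/esym/left_invmx.
by rewrite -phi_cat -[_ ++ w]cats0 -catA (phi_beq (winv_catK w [::])).
Qed.

Lemma phi_Delta2 : phi Delta2 = (-1)%:M.
Proof. by rewrite phi_cat phi_Delta scalar_mx2 mx2_mul; congr mx2; lia. Qed.

Lemma phi_Delta2_pow k : phi (Delta2_pow k) = ((-1) ^+ `|k|%N)%:M.
Proof.
have phi_pow z n : phi (flatten (nseq n z)) = phi z ^+ n.
  by elim: n => [|n IH] /=; rewrite ?expr0 // phi_cat IH exprS.
have phi_Delta2V : phi (winv Delta2) = (-1)%:M.
  by rewrite /phi /winv /Delta2 /Delta /= !scalar_mx2 !mx2_mul; congr mx2; lia.
by case: k => n; rewrite /Delta2_pow phi_pow ?phi_Delta2V ?phi_Delta2 rmorphXn.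
Qed.

Lemma expsum_cat u v : expsum (u ++ v) = expsum u + expsum v.
Proof. exact: big_cat. Qed.

Lemma expsum_winv w : expsum (winv w) = - expsum w.
Proof.
rewrite /expsum /winv big_rev big_map -sumrN; apply: eq_bigr => a _.
by case: a.
Qed.

Lemma expsum_beq {u v} : beq u v -> expsum u = expsum v.
Proof.
elim=> {u v} [w|u v _ ->|u v w _ -> _ ->|u v a|u v] //; rewrite !expsum_cat.
- by rewrite /expsum !big_cons big_nil; case: a => /=; lia.
- by rewrite /expsum !big_cons big_nil.
Qed.

Lemma expsum_Delta2_pow k : expsum (Delta2_pow k) = 6 * k.
Proof.
have expsum_pow z n : expsum (flatten (nseq n z)) = expsum z *+ n.
  elim: n => [|n IH]; first by rewrite mulr0n /expsum big_nil.
  by rewrite -[flatten _]/(z ++ flatten (nseq n z)) expsum_cat IH mulrS.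
have expsum_Delta2 : expsum Delta2 = 6 by rewrite /expsum !big_cons big_nil.
case: k => n; rewrite /Delta2_pow expsum_pow ?expsum_winv expsum_Delta2 ?NegzE; lia.
Qed.

(** * Normal form modulo Δ² *)

(* A pair (k, u) stands for Δ^(2k) · u, where u is a word in the letters
   LX = x = σ1σ2σ1, LY = y = σ1σ2 and LYY = y²; as x² = y³ = Δ² is central,
   every braid has such a form with u alternating between LX and y-letters. *)
Inductive letter := LX | LY | LYY.

Definition letter_word (l : letter) : word :=
  match l with LX => Delta | LY => [:: s1; s2] | LYY => [:: s1; s2; s1; s2] end.

Definition letters_word (u : seq letter) : word := flatten (map letter_word u).

Definition is_LX (l : letter) : bool := if l is LX then true else false.

Definition alternating (u : seq letter) : bool := sorted (fun l l' => is_LX l != is_LX l') u.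

Definition nf_word (p : int * seq letter) : word := Delta2_pow p.1 ++ letters_word p.2.

Inductive step := StepX | StepY | StepDelta2V.

Definition step_word (s : step) : word :=
  match s with StepX => Delta | StepY => [:: s1; s2] | StepDelta2V => winv Delta2 end.

Definition step_act (s : step) (p : int * seq letter) : int * seq letter :=
  let: (k, u) := p in
  match s, u with
  | StepX, LX :: u' => (k + 1, u')
  | StepX, _ => (k, LX :: u)
  | StepY, LY :: u' => (k, LYY :: u')
  | StepY, LYY :: u' => (k + 1, u')
  | StepY, _ => (k, LY :: u)
  | StepDelta2V, _ => (k - 1, u)
  end.

Lemma beq_step s p : beq (step_word s ++ nf_word p) (nf_word (step_act s p)).
Proof.
case: p => k u; rewrite /nf_word.
have Dk := Delta2_pow_central k.
have push w l u' : w = letter_word l ->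
    beq (w ++ Delta2_pow k ++ letters_word u') (Delta2_pow k ++ letters_word (l :: u')).
  by move=> ->; rewrite central_swap.
have absorb w l u' : beq (w ++ letter_word l) Delta2 ->
    beq (w ++ Delta2_pow k ++ letters_word (l :: u')) (Delta2_pow (k + 1) ++ letters_word u').
  move=> H; rewrite -[letters_word _]/(letter_word l ++ letters_word u') central_swap //.
  by rewrite (catA w) H catA -Dk -Delta2_powD1.
case: s; last by rewrite -[step_word _]/(winv Delta2) catA Delta2_powB1.
all: case: u => [|[] u]; try (apply: push; reflexivity).
- by apply: absorb.
- by rewrite central_swap.
- by apply: absorb; symmetry; exact: (beq_braid [:: s1; s2; s1] [::]).
Qed.

Lemma alternating_step s p : alternating p.2 -> alternating (step_act s p).2.
Proof.
case: p => k u; rewrite /alternating.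
by case: s; case: u => [|[] [|[] u]] //= /andP[].
Qed.

(* For instance σ1 = y²·Δ⁻²·x, because y²x = y³σ1 = Δ²σ1. *)
Definition gen_steps (a : gen) : seq step :=
  match a with
  | s1 => [:: StepY; StepY; StepDelta2V; StepX]
  | s2 => [:: StepDelta2V; StepX; StepY; StepY]
  | s1i => [:: StepDelta2V; StepX; StepY]
  | s2i => [:: StepDelta2V; StepY; StepX]
  end.

Lemma beq_gen_steps a : beq [:: a] (flatten (map step_word (gen_steps a))).
Proof.
case: a; try exact: free_reduce_beq.
- transitivity [:: s1; s2; s1; s2; s2i; s1i; s2i]; first exact: free_reduce_beq.
  rewrite -[[:: s1; s2; s1; s2; _; _; _]]/([:: s1; s2; s1; s2] ++ [:: s2i; s1i; s2i]).
  by rewrite -beq_braid_inv; exact: free_reduce_beq.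
- transitivity [:: s2i; s1i; s2i; s2; s1]; first exact: free_reduce_beq.
  rewrite -[[:: s2i; s1i; s2i; s2; s1]]/([:: s2i; s1i; s2i] ++ [:: s2; s1]).
  by rewrite -beq_braid_inv; exact: free_reduce_beq.
Qed.

Definition nf (w : word) : int * seq letter :=
  foldr (fun a p => foldr step_act p (gen_steps a)) (0, [::]) w.

Lemma beq_nf w : beq w (nf_word (nf w)).
Proof.
elim: w => [|a w IH] //=; rewrite -cat1s {1}IH beq_gen_steps.
elim: (gen_steps a) => [|s ss IHs] //=.
by rewrite -catA IHs beq_step.
Qed.

Lemma alternating_nf w : alternating (nf w).2.
Proof.
elim: w => [|a w IH] //=.
by elim: (gen_steps a) => [|s ss IHs] //=; exact: alternating_step.
Qed.

(** * Ping-pong and the kernel of φ *)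

Definition mU : 'M[int]_2 := mx2 1 (-1) 0 1.
Definition mL : 'M[int]_2 := mx2 1 0 (-1) 1.

Definition pingpong_cone (M : 'M[int]_2) : Prop :=
  [/\ 1 <= M 0 0, 1 <= M 1 1, M 0 1 <= 0, M 1 0 <= 0 & M 0 1 + M 1 0 < 0].

Lemma pingpong_cone_mx2 a b c d :
  pingpong_cone (mx2 a b c d) <-> [/\ 1 <= a, 1 <= d, b <= 0, c <= 0 & b + c < 0].
Proof. by rewrite /pingpong_cone !mxE. Qed.

Lemma pingpong_cone_neq1 M : pingpong_cone M -> M <> 1%:M.
Proof. by move=> [_ _ _ _]; apply: contraTnot => ->; rewrite !mxE. Qed.

Lemma pingpong_cone_mul {P M} : P = mU \/ P = mL -> M = 1%:M \/ pingpong_cone M ->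
  pingpong_cone (P *m M).
Proof.
move=> HP [->|]; first by rewrite mulmx1; case: HP => ->; apply/pingpong_cone_mx2.
rewrite [M]mx2_eta => /pingpong_cone_mx2 HM.
by case: HP => ->; rewrite mx2_mul; apply/pingpong_cone_mx2; case: HM => *; split; lia.
Qed.

Definition headY (u : seq letter) : bool := if u is l :: _ then ~~ is_LX l else false.

(* φ(y) = mX·mU and φ(y²) = mX·mL, so each pair x·y^i of an alternating word
   contributes -mU or -mL, and products of mU and mL stay in the cone. *)
Definition pingpong_shape (u : seq letter) : Prop :=
  exists (s : int) (N : 'M[int]_2) (f : bool),
  [/\ s = 1 \/ s = -1, N = 1%:M \/ pingpong_cone N, N = 1%:M -> u = nseq f LX
    & phi (letters_word u) = mX ^+ headY u *m (s *: N) *m mX ^+ f].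

Lemma mX_sqr : mX *m mX = (-1)%:M.
Proof. by rewrite scalar_mx2 mx2_mul; congr mx2; lia. Qed.

Lemma alternating_headY {l u} : alternating (l :: u) -> headY u = ~~ nilp u && is_LX l.
Proof. by case: u => [|l' u] //; rewrite /alternating /= => /andP[]; case: l; case: l'. Qed.

Lemma alternating_pingpong_shape u : alternating u -> pingpong_shape u.
Proof.
elim: u => [|l u IH] Hu.
  by exists 1, 1%:M, false; split; [left | left | | rewrite scale1r !mulmx1].
have [s [N [f [Hs HN HN1 E]]]] := IH (path_sorted Hu).
have hu := alternating_headY Hu.
have phi_l : phi (letters_word (l :: u)) = phi (letter_word l) *m phi (letters_word u).
  by rewrite -phi_cat.
have shapeY P : P = mU \/ P = mL -> ~~ is_LX l ->
    phi (letter_word l) = mX *m P -> pingpong_shape (l :: u).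
  move=> HP hl El; have cone := pingpong_cone_mul HP HN.
  exists s, (P *m N), f; split=> //; first by right.
    by move/(pingpong_cone_neq1 _ cone).
  rewrite phi_l El E hu (negbTE hl) andbF /= hl expr0 expr1 mul1mx.
  by rewrite scalemxAr !mulmxA.
case: l Hu hu phi_l shapeY => Hu hu phi_l shapeY; last first.
- apply: (shapeY mL) => //; first by right.
  by rewrite /phi /= !scalar_mx2 !mx2_mul; congr mx2; lia.
- apply: (shapeY mU) => //; first by left.
  by rewrite /phi /= !scalar_mx2 !mx2_mul; congr mx2; lia.
case: (boolP (nilp u)) => [/nilP ->|u_neq0].
  exists 1, 1%:M, true; split; [by left | by left | by [] |].
  by rewrite -[letters_word _]/(Delta ++ [::]) cats0 phi_Delta scale1r mulmx1 mul1mx.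
rewrite u_neq0 /= in hu.
have coneN : pingpong_cone N.
  by case: HN => [/HN1 Eu|//]; move: hu u_neq0; rewrite Eu; case: (f).
exists (- s), N, f; split.
- by case: Hs => ->; [right | left]; rewrite ?opprK.
- by right.
- by move/(pingpong_cone_neq1 _ coneN).
rewrite phi_l E hu -[letter_word LX]/Delta phi_Delta /= expr0 expr1 mul1mx.
by rewrite !mulmxA mX_sqr mul_scalar_mx scalerA mulN1r.
Qed.

Lemma alternating_phi_scalar u t : alternating u -> phi (letters_word u) = t%:M -> u = [::].
Proof.
move=> /alternating_pingpong_shape [s [N [f [Hs HN HN1 ->]]]].
case: HN => [N1|].
  have := HN1 N1; case: (f) => -> //=.
  rewrite N1 scalemx1 ?expr0 ?expr1 mul1mx mul_scalar_mx /mX mx2_scale scalar_mx2.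
  by move=> /mx2_inj [_ ? _ _]; case: Hs => Es; subst s; lia.
rewrite [N]mx2_eta => /pingpong_cone_mx2 [? ? ? ? ?].
case: (headY u); case: (f);
  rewrite ?expr0 ?expr1 ?mul1mx ?mulmx1 /mX mx2_scale ?mx2_mul scalar_mx2 =>
  /mx2_inj [*]; case: Hs => Es; subst s; lia.
Qed.

Lemma phi_kernel {w} : phi w = 1%:M -> (12 %| expsum w)%Z /\ (expsum w = 0 -> beq w [::]).
Proof.
move=> phi_w; have Enf := beq_nf w; have alt := alternating_nf w.
move: (nf w) Enf alt => [k u] Enf /= alt.
have phi_u : phi (letters_word u) = ((-1) ^+ `|k|%N)%:M.
  move: (phi_beq Enf); rewrite phi_w /nf_word phi_cat phi_Delta2_pow /= => E.
  have sgn2 : ((-1) ^+ `|k|%N)%:M *m ((-1) ^+ `|k|%N)%:M = 1%:M :> 'M[int]_2.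
    by rewrite -scalar_mxM -expr2 sqrr_sign.
  by rewrite -[LHS]mul1mx -sgn2 -mulmxA -E mulmx1.
have u0 := alternating_phi_scalar _ _ alt phi_u; subst u.
have k_even : (2 %| k)%Z.
  move: phi_u; rewrite -[phi _]/(1%:M) => /matrixP/(_ 0 0).
  by rewrite !mxE /= -signr_odd dvdzE dvdn2; case: (odd _).
have expsum_w : expsum w = 6 * k.
  by rewrite (expsum_beq Enf) /nf_word expsum_cat expsum_Delta2_pow /expsum big_nil addr0.
split=> [|w0]; first by rewrite expsum_w; lia.
by rewrite Enf (_ : k = 0) //; lia.
Qed.

(** * Surjectivity of φ *)

Lemma phi_unipotent b : exists w, phi w = mx2 1 b 0 1.
Proof.
have phi_cons a w : phi (a :: w) = phigen a *m phi w by [].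
case: b => n; elim: n => [|n [w Ew]].
- by exists [::]; rewrite [phi _]/= scalar_mx2.
- by exists (s1 :: w); rewrite phi_cons Ew mx2_mul; congr mx2; lia.
- by exists [:: s1i]; rewrite phi_cons mulmx1.
- by exists (s1i :: w); rewrite phi_cons Ew mx2_mul !NegzE; congr mx2; lia.
Qed.

Lemma phi_DeltaV : phi (winv Delta) = mx2 0 (-1) 1 0.
Proof. by rewrite /phi /winv /Delta /= scalar_mx2 !mx2_mul; congr mx2; lia. Qed.

Lemma mulz_eq1 (a d : int) : a * d = 1 -> a = 1 /\ d = 1 \/ a = -1 /\ d = -1.
Proof.
move=> Had; have : `|a|%N = 1%N.
  by move/(congr1 absz): Had; rewrite abszM => /eqP; rewrite muln_eq1 => /andP[/eqP].
move=> abs_a; have [Ea|Ea] : a = 1 \/ a = -1 by lia.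
all: by rewrite Ea in Had *; lia.
Qed.

Lemma phi_upper a b d : a * d = 1 -> exists w, phi w = mx2 a b 0 d.
Proof.
move=> /mulz_eq1 [[-> ->]|[-> ->]]; first exact: phi_unipotent.
have [w Ew] := phi_unipotent (- b); exists (Delta2 ++ w).
by rewrite phi_cat phi_Delta2 Ew mul_scalar_mx mx2_scale; congr mx2; lia.
Qed.

Lemma phi_surj {M} : \det M = 1 -> exists w, phi w = M.
Proof.
have lower0 a b c d : c = 0 -> a * d - b * c = 1 -> exists w, phi w = mx2 a b c d.
  by move=> -> Hdet; apply: phi_upper; rewrite -Hdet mulr0 subr0.
suff euclid N a b c d : (`|c| <= N)%N -> a * d - b * c = 1 -> exists w, phi w = mx2 a b c d.
  by rewrite [M]mx2_eta mx2_det; apply: euclid.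
elim: N a b c d => [|N IH] a b c d Hc Hdet; first by apply: lower0 Hdet; lia.
have [c0|c_neq0] := eqVneq c 0; first exact: lower0 c0 Hdet.
(* Euclid on the first column: [a b; c d] = [1 q; 0 1] · mX⁻¹ · [c d; -r -(b - q d)]. *)
set q := (a %/ c)%Z; set r := (a %% c)%Z.
have Ha : a = q * c + r := divz_eq a c.
have [w Ew] : exists w, phi w = mx2 c d (- r) (- (b - q * d)).
  apply: IH; last by rewrite -Hdet Ha; ring.
  by have := ltz_mod a c_neq0; have := modz_ge0 a c_neq0; lia.
have [v Ev] := phi_unipotent q; exists (v ++ winv Delta ++ w).
by rewrite !phi_cat Ev phi_DeltaV Ew !mx2_mul; congr mx2; lia.
Qed.

(** * Conjugacy classes *)

Lemma bconj_refl g : bconj g g.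
Proof. by exists [::]; rewrite cats0. Qed.

Lemma beq_bconj h g : beq h g -> bconj h g.
Proof. by exists [::]; rewrite cats0. Qed.

Lemma bconj_trans {h g k} : bconj h g -> bconj g k -> bconj h k.
Proof.
move=> [w Hw] [v Hv]; exists (w ++ v).
by rewrite Hw Hv winv_cat -!catA.
Qed.

Lemma bconj_sym {h g} : bconj h g -> bconj g h.
Proof.
move=> [w Hw]; exists (winv w); rewrite winvK Hw -!catA winv_catK.
by rewrite -[winv w ++ w]cats0 -catA winv_catK cats0.
Qed.

Lemma b3classE g h : bconj g h -> b3class g = b3class h.
Proof.
by move=> Hgh; apply/seteqP; split=> x /= Hx; apply: bconj_trans Hx _; last exact: bconj_sym.
Qed.

Lemma b3class_bconj g h : b3class g = b3class h -> bconj g h.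
Proof. by move=> E; have : b3class h g by rewrite -E; exact: bconj_refl. Qed.

Lemma central_bconj {z h g} : central z -> bconj h g -> bconj (z ++ h) (z ++ g).
Proof.
move=> Hz [w Hw]; exists w.
by rewrite Hw !catA -(Hz w) -!catA.
Qed.

Lemma sl2class_refl A : sl2class A A.
Proof. by exists 1%:M; rewrite det1 invmx1 mul1mx mulmx1. Qed.

Lemma unitmx_det1 (P : 'M[int]_2) : \det P = 1 -> P \in unitmx.
Proof. by move=> detP; rewrite unitmxE detP unitr1. Qed.

Lemma sl2class_trans {A B C} : sl2class A B -> sl2class B C -> sl2class A C.
Proof.
move=> [P [detP ->]] [Q [detQ ->]]; exists (Q *m P); split.
  by rewrite det_mulmx detP detQ mulr1.
rewrite (@left_invmx _ _ (Q *m P) (invmx P *m invmx Q)) ?mulmxA //.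
by rewrite -(mulmxA _ (invmx Q)) mulVmx ?unitmx_det1 // mulmx1 mulVmx ?unitmx_det1.
Qed.

Lemma sl2class_eq A B : sl2class A = sl2class B -> sl2class A B.
Proof. by move=> ->; exact: sl2class_refl. Qed.

Lemma phi_bconj h g : bconj h g -> sl2class (phi g) (phi h).
Proof.
move=> [w Hw]; exists (phi w); split; first exact: phi_det.
by rewrite (phi_beq Hw) !phi_cat phi_winv mulmxA.
Qed.

Lemma phistar_class g : phistar (b3class g) = sl2class (phi g).
Proof.
apply/seteqP; split=> B /=.
  by move=> [h [Hh gB]]; exact: sl2class_trans (phi_bconj _ _ Hh) gB.
by move=> gB; exists g; split=> //; exact: bconj_refl.
Qed.

Lemma sl2class_phi g h : sl2class (phi g) (phi h) ->
  (12 %| expsum h - expsum g)%Z /\ (expsum h = expsum g -> bconj h g).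
Proof.
move=> [P [detP Eh]]; have [p Ep] := phi_surj detP.
set w := winv h ++ p ++ g ++ winv p.
have phi_w : phi w = 1%:M.
  rewrite /w !phi_cat !phi_winv Ep [P *m _]mulmxA -Eh mulVmx //.
  by rewrite unitmx_det1 // phi_det.
have expsum_w : expsum w = expsum g - expsum h.
  by rewrite /w !expsum_cat !expsum_winv; lia.
have [div12 w_triv] := phi_kernel phi_w.
split=> [|Ehg]; first by move: div12; rewrite expsum_w; lia.
exists p; rewrite -[h]cats0 -w_triv; last lia.
by rewrite /w cat_winvK.
Qed.

Definition mul_class (z : word) (C : set word) : set word :=
  [set h | exists2 g, C g & bconj h (z ++ g)].

Lemma mul_class_b3class z g : central z -> mul_class z (b3class g) = b3class (z ++ g).
Proof.
move=> Hz; apply/seteqP; split=> h /=.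
  by move=> [g' Hg' Hh]; exact: bconj_trans Hh (central_bconj Hz Hg').
by move=> Hh; exists g => //; exact: bconj_refl.
Qed.

Lemma phistar_mul_class z g :
  central z -> phistar (mul_class z (b3class g)) = sl2class (phi z *m phi g).
Proof. by move=> Hz; rewrite mul_class_b3class // phistar_class phi_cat. Qed.

Lemma btrace_scalar_cat {z s} g : phi z = s%:M -> btrace (z ++ g) = s * btrace g.
Proof. by move=> phi_z; rewrite /btrace phi_cat phi_z mul_scalar_mx mxtraceZ. Qed.

Lemma mul_class_bij t n {z s} : central z -> phi z = s%:M -> s ^+ 2 = 1 ->
  set_bij (Xset t n) (Xset (s * t) (n + expsum z)) (mul_class z).
Proof.
move=> Hz phi_z s2.
have phi_zV : phi (winv z) = s%:M.
  by rewrite phi_winv phi_z; apply: left_invmx; rewrite -scalar_mxM -expr2 s2.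
have cancel_z g : bconj (winv z ++ z ++ g) g by apply: beq_bconj; exact: winv_catK.
split.
- move=> _ [g [-> [<- <-]]]; exists (z ++ g); split; first exact: mul_class_b3class.
  by rewrite (btrace_scalar_cat _ phi_z) expsum_cat addrC.
- move=> C1 C2; rewrite !in_setE => -[g1 [-> _]] [g2 [-> _]].
  rewrite !mul_class_b3class // => /b3class_bconj E; apply: b3classE.
  have := central_bconj (central_winv _ Hz) E => E'.
  exact: bconj_trans (bconj_sym (cancel_z g1)) (bconj_trans E' (cancel_z g2)).
- move=> _ [g [-> [Hg Hn]]]; exists (b3class (winv z ++ g)).
    exists (winv z ++ g); split=> //; split.
      by rewrite (btrace_scalar_cat _ phi_zV) Hg mulrA -expr2 s2 mul1r.
    by rewrite expsum_cat expsum_winv Hn; lia.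
  by rewrite mul_class_b3class //; apply: b3classE; apply: beq_bconj; exact: cat_winvK.
Qed.

Definition opp_class (D : set 'M[int]_2) : set 'M[int]_2 := [set B | D (- B)].

Lemma opp_classK : involutive opp_class.
Proof. by move=> D; apply/seteqP; split=> B; rewrite /opp_class /= opprK. Qed.

Lemma opp_sl2class A : opp_class (sl2class A) = sl2class (- A).
Proof.
apply/seteqP; split=> B [P [detP E]]; exists P; split=> //.
  by rewrite mulmxN mulNmx -E opprK.
by rewrite E mulmxN mulNmx opprK.
Qed.

Lemma opp_class_bij t : set_bij (Yset t) (Yset (- t)) opp_class.
Proof.
have opp_Yset t' D : Yset t' D -> Yset (- t') (opp_class D).
  move=> [A [detA [trA ->]]]; exists (- A); split; last split.
  - by rewrite -scaleN1r detZ expr2 mulN1r opprK mul1r.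
  - by rewrite -scaleN1r mxtraceZ mulN1r trA.
  - exact: opp_sl2class.
split.
- exact: opp_Yset.
- by move=> D1 D2 _ _ E; rewrite -(opp_classK D1) E opp_classK.
- move=> D YD; exists (opp_class D); last exact: opp_classK.
  by rewrite -(opprK t); exact: opp_Yset.
Qed.

Lemma phistar_Xset_inj t n : set_inj (Xset t n) phistar.
Proof.
move=> C1 C2; rewrite !in_setE => -[g1 [-> [_ n1]]] [g2 [-> [_ n2]]].
rewrite !phistar_class => /sl2class_eq /sl2class_phi [_ conj12].
by symmetry; apply: b3classE; apply: conj12; rewrite n1 n2.
Qed.

Lemma phistar_Xcoprod12_bij t n : set_bij (Xcoprod12 t n) (Yset t) (fun p => phistar p.2).
Proof.
split.
- move=> [j C] [g [-> [tg _]]]; exists (phi g); split; first exact: phi_det.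
  by split=> //; exact: phistar_class.
- move=> [j1 C1] [j2 C2]; rewrite !in_setE /Xcoprod12 /= => -[g1 [-> [_ n1]]] [g2 [-> [_ n2]]].
  rewrite !phistar_class => /sl2class_eq /sl2class_phi [div12 conj12].
  have j12 : j2 = j1.
    by apply: ord_inj; move: div12; rewrite n1 n2; have := ltn_ord j1; have := ltn_ord j2; lia.
  subst j2; congr pair; symmetry; apply: b3classE; apply: conj12.
  by rewrite n1 n2.
- move=> _ [A [detA [tA ->]]]; have [g phi_g] := phi_surj detA.
  set q := ((expsum g - n) %/ 12)%Z; set r := ((expsum g - n) %% 12)%Z.
  have r_bounds : 0 <= r < 12 by rewrite modz_ge0 ?ltz_pmod.
  have r_lt12 : (`|r| < 12)%N by lia.
  have phi_Delta4_pow k : phi (Delta2_pow (2 * k)) = 1%:M.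
    by rewrite phi_Delta2_pow abszM mulnC exprM sqrr_sign.
  exists (Ordinal r_lt12, b3class (Delta2_pow (2 * - q) ++ g)).
    exists (Delta2_pow (2 * - q) ++ g); split=> //; split.
      by rewrite /btrace phi_cat phi_Delta4_pow mul1mx phi_g.
    by rewrite expsum_cat expsum_Delta2_pow /=; have := divz_eq (expsum g - n) 12; lia.
  by rewrite /= phistar_class phi_cat phi_Delta4_pow mul1mx phi_g.
Qed.

Theorem lemma2p1 (t n : int) :
  (* (i) *)
  set_inj (Xset t n) phistar /\
  (* (ii) *)
  (exists (alpha : set word -> set word) (beta : set 'M[int]_2 -> set 'M[int]_2),
     set_bij (Xset t n) (Xset (- t) (n + 6)) alpha /\
     set_bij (Yset t) (Yset (- t)) beta /\
     (forall C, Xset t n C -> phistar (alpha C) = beta (phistar C))) /\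
  (* (iii) *)
  (exists gamma : set word -> set word,
     set_bij (Xset t n) (Xset t (n + 12)) gamma /\
     (forall C, Xset t n C -> phistar (gamma C) = phistar C)) /\
  (* (iv) *)
  set_bij (Xcoprod12 t n) (Yset t) (fun p => phistar p.2).
Proof.
have central1 := Delta2_pow_central 1; have central2 := Delta2_pow_central 2.
have phi1 : phi (Delta2_pow 1) = (-1)%:M by rewrite phi_Delta2_pow expr1.
have phi2 : phi (Delta2_pow 2) = 1%:M by rewrite phi_Delta2_pow -signr_odd.
split; [exact: phistar_Xset_inj | split; [|split]].
- exists (mul_class (Delta2_pow 1)), opp_class; split; [|split].
  + have := mul_class_bij t n central1 phi1 (etrans (sqrrN 1) (expr1n _ 2)).
    by rewrite mulN1r expsum_Delta2_pow.
  + exact: opp_class_bij.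
  + move=> _ [g [-> _]].
    by rewrite phistar_mul_class // phi1 mul_scalar_mx scaleN1r phistar_class opp_sl2class.
- exists (mul_class (Delta2_pow 2)); split.
  + have := mul_class_bij t n central2 phi2 (expr1n _ 2).
    by rewrite mul1r expsum_Delta2_pow.
  + by move=> _ [g [-> _]]; rewrite phistar_mul_class // phi2 mul1mx phistar_class.
- exact: phistar_Xcoprod12_bij.
Qed.
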